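(* Let $0<q<1$. Define the $q$-Genocchi numbers $g_{n,q}$ and $q$-Genocchi polynomials $G_{n,q}(x)$ by \[ \frac{2t}{e_q(t)+1}=\sum_{n=0}^\infty g_{n,q}\frac{t^n}{[n]_q!},\qquad \frac{2t}{e_q(t)+1}e_q(tx)=\sum_{n=0}^\infty G_{n,q}(x)\frac{t^n}{[n]_q!}. \] Then for every positive integer $n$, $G_{n,q}(x)$ satisfies the $q$-difference equation \[ \sum_{k=2}^{n}\frac{q^{n-k-1}g_{k,q}}{2[k]_q!}D_{q,x}^kG_{n,q}(x)-\frac{q^{n-2}}{2}D_{q,x}G_{n,q}(x)+q^{n-1}G_{n,q}(x)+xq^nD_{q,x}G_{n,q}(x)-[n]_qG_{n,q}(qx)=0, \] i.e. \[ \frac{1}{2q}\frac{g_{n,q}}{[n]_q!}D_{q,x}^nG_{n,q}(x)+\frac{g_{n-1,q}}{2[n-1]_q!}D_{q,x}^{n-1}G_{n,q}(x)+\dots+\frac{q^{n-3}g_{2,q}}{2[2]_q!}D_{q,x}^2G_{n,q}(x)-\frac{q^{n-2}}{2}D_{q,x}G_{n,q}(x)+q^{n-1}G_{n,q}(x)+xq^nD_{q,x}G_{n,q}(x)-[n]_qG_{n,q}(qx)=0. \]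
   Context: $[n]_q=\frac{1-q^n}{1-q}$, $[0]_q!=1$, $[n]_q!=[n]_q\cdots[1]_q$, $e_q(t)=\sum_{n\ge0}\frac{t^n}{[n]_q!}$. The $q$-derivative is $D_{q,x}f(x)=\frac{f(qx)-f(x)}{(q-1)x}$ (on polynomials $D_{q,x}x^n=[n]_qx^{n-1}$), and $D_{q,x}^k$ is its $k$-fold iterate. *)

From HB Require Import structures.
From mathcomp Require Import all_boot all_order all_algebra.
Set Implicit Arguments. Unset Strict Implicit. Unset Printing Implicit Defensive.
Import Order.TTheory GRing.Theory Num.Theory.
Local Open Scope ring_scope.

Section QDefs.
Variable R : realFieldType.

Definition qint (q : R) (n : nat) : R := (1 - q ^+ n) / (1 - q).

Definition qfact (q : R) (n : nat) : R := \prod_(i < n) qint q i.+1.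

(* coefficient of t^m in e_q(t) + 1 *)
Definition eq1coef (q : R) (m : nat) : R := (qfact q m)^-1 + (m == 0%N)%:R.

Definition qderiv (q : R) (p : {poly R}) : {poly R} :=
  \poly_(i < (size p).-1) (qint q i.+1 * p`_i.+1).

Definition qderivn (q : R) (k : nat) (p : {poly R}) : {poly R} :=
  iter k (qderiv q) p.

End QDefs.

(* Put a_k = g_k / [k]_q! and A(t) = sum_k a_k t^k = 2t / (e_q(t) + 1).  The second generating
   function gives G_n(x) = [n]_q! sum_i a_(n-i) x^i / [i]_q!, so every term of the operator is
   explicit in the a_k, and the coefficient of x^j of the left-hand side is
   [n]_q!/[j]_q! q^(n-1) X_(n-j), where X_m is the coefficient of t^m in the q-Riccati expression
       A(t/q) A(t) / 2 - t A(t) / q + A(t) - t (D_q A)(t/q).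
   This expression vanishes: multiplied by e_q(t) + 1, whose constant term 2 is invertible, it
   becomes 0 by A(t) (e_q(t) + 1) = 2t, D_q e_q = e_q and the q-Leibniz rule.  Power series are
   handled through their coefficient sequences and the Cauchy product [conv]. *)

From HB Require Import structures.
From mathcomp Require Import all_boot all_order all_algebra.
From mathcomp Require Import ring lra zify.
Set Implicit Arguments. Unset Strict Implicit. Unset Printing Implicit Defensive.
Import Order.TTheory GRing.Theory Num.Theory.
Local Open Scope ring_scope.

Section Convolution.
Variable R : nzRingType.
Implicit Types (f h w : nat -> R).

Definition conv f h (m : nat) : R := \sum_(k < m.+1) f k * h (m - k)%N.

Lemma coef_mul_conv f h N m : (m < N)%N ->
  ((\poly_(i < N) f i) * \poly_(i < N) h i)`_m = conv f h m.
Proof.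
move=> mN; rewrite coefM; apply: eq_bigr => k _.
by rewrite !coef_poly (leq_ltn_trans (leq_ord k) mN) (leq_ltn_trans (leq_subr k m) mN).
Qed.

Lemma convA f h w m : conv (conv f h) w m = conv f (conv h w) m.
Proof.
pose P f := \poly_(i < m.+1) f i.
have -> : conv (conv f h) w m = (P f * P h * P w)`_m.
  rewrite coefM; apply: eq_bigr => k _.
  by rewrite coef_mul_conv // coef_poly ltnS leq_subr.
rewrite -mulrA coefM; apply: eq_bigr => k _.
by rewrite coef_mul_conv ?ltnS ?leq_subr // coef_poly ltn_ord.
Qed.

Lemma conv_delta f w d m :
  conv f (fun l => (l == d)%:R * w l) m = if (d <= m)%N then f (m - d)%N * w d else 0.
Proof.
case: leqP => [dm | md]; last first.
  by rewrite /conv big1 // => k _; rewrite (_ : (m - k == d)%N = false) ?mul0r ?mulr0 //; lia.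
have kd : (m - d < m.+1)%N by rewrite ltnS leq_subr.
rewrite /conv (bigD1 (Ordinal kd)) //= subKn // eqxx mul1r big1 ?addr0 // => k /eqP kmd.
rewrite (_ : (m - k == d)%N = false) ?mul0r ?mulr0 //.
apply/eqP => E; apply: kmd; apply: val_inj => /=; have := ltn_ord k; lia.
Qed.

Lemma conv_shiftl f w m : conv (fun k => f k.-1) w m.+1 = f 0%N * w m.+1 + conv f w m.
Proof.
by rewrite /conv big_ord_recl subn0; congr (_ + _); apply: eq_bigr => k _; rewrite subSS.
Qed.

Lemma conv_widen f h m N : h 0%N = 0 -> (m <= N)%N ->
  conv f h m = \sum_(0 <= k < N.+1) f k * h (m - k)%N.
Proof.
move=> h0 mN; rewrite /conv -(big_mkord xpredT (fun k => f k * h (m - k)%N)).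
rewrite (@big_cat_nat _ _ _ m.+1 0 N.+1) //= [X in _ = _ + X]big1_seq ?addr0 // => k /=.
by rewrite mem_index_iota => /andP[mk _]; rewrite (_ : (m - k = 0)%N) ?h0 ?mulr0 //; lia.
Qed.

End Convolution.

Lemma conv_eq0_cancel (R : idomainType) (f u : nat -> R) :
  u 0%N != 0 -> (forall m, conv f u m = 0) -> forall m, f m = 0.
Proof.
move=> u0 fu0; elim/ltn_ind => m IH; apply/eqP.
have := fu0 m; rewrite /conv big_ord_recr /= subnn big1 ?add0r => [/eqP|k _].
  by rewrite mulf_eq0 (negPf u0) orbF.
by rewrite IH ?mul0r.
Qed.

Section QNumbers.
Variables (R : realFieldType) (q : R).

Lemma qint0 : qint q 0 = 0.
Proof. by rewrite /qint expr0 subrr mul0r. Qed.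

Lemma qint1 : q != 1 -> qint q 1 = 1.
Proof. by move=> q1; rewrite /qint expr1 divff // subr_eq0 eq_sym. Qed.

Lemma qintD k l : qint q (k + l) = qint q l + q ^+ l * qint q k.
Proof.
have [->|q1] := eqVneq q 1; first by rewrite /qint subrr invr0 !mulr0 addr0.
have q1' : 1 - q != 0 by rewrite subr_eq0 eq_sym.
by rewrite /qint exprD; field.
Qed.

Lemma qfact0 : qfact q 0 = 1.
Proof. by rewrite /qfact big_ord0. Qed.

Lemma qfactS n : qfact q n.+1 = qfact q n * qint q n.+1.
Proof. by rewrite /qfact big_ord_recr. Qed.

(* The q-Leibniz rule D_q(F W)(t) = (D_q F)(t) W(q t) + F(t) (D_q W)(t), coefficientwise. *)
Lemma qint_conv (f w : nat -> R) m :
  qint q m * conv f w m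
  = conv (fun k => qint q k * f k) (fun l => q ^+ l * w l) m
    + conv f (fun l => qint q l * w l) m.
Proof.
rewrite /conv mulr_sumr -big_split; apply: eq_bigr => k _ /=.
by rewrite -{1}(subnKC (leq_ord k)) qintD; ring.
Qed.

Lemma coef_qderiv p i : (qderiv q p)`_i = qint q i.+1 * p`_i.+1.
Proof.
rewrite coef_poly; case: ltnP => // hi.
by rewrite nth_default ?mulr0 //; move: hi; case: (size p) => //= s; lia.
Qed.

Lemma coef_qderivn k p j :
  qfact q j * (qderivn q k p)`_j = qfact q (j + k) * p`_(j + k).
Proof.
elim: k j => [|k IH] j; first by rewrite addn0.
by rewrite /qderivn iterS coef_qderiv mulrA -qfactS IH addSnnS.
Qed.

Lemma coef_mulX_qderiv p j : ('X * qderiv q p)`_j = qint q j * p`_j.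
Proof. by rewrite coefXM; case: j => [|j]; rewrite ?qint0 ?mul0r ?coef_qderiv. Qed.

Hypotheses (q_gt0 : 0 < q) (q_lt1 : q < 1).

Lemma qint_neq0 n : qint q n.+1 != 0.
Proof.
rewrite /qint mulf_neq0 ?invr_eq0 // subr_eq0 eq_sym lt_eqF //.
by rewrite exprn_ilt1 ?ltW.
Qed.

Lemma qfact_neq0 n : qfact q n != 0.
Proof. by apply/prodf_neq0 => i _; apply: qint_neq0. Qed.

(* D_q (e_q + 1) = e_q, coefficientwise. *)
Lemma qint_eq1coefS l : qint q l.+1 * eq1coef q l.+1 = eq1coef q l - (l == 0)%N%:R.
Proof.
rewrite /eq1coef /= addr0 addrK qfactS invfM mulrCA mulfV ?mulr1 //.
exact: qint_neq0.
Qed.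

End QNumbers.

Lemma coef_comp_scaleX (R : comNzRingType) (c : R) (p : {poly R}) j :
  (p \Po (c *: 'X))`_j = c ^+ j * p`_j.
Proof.
rewrite coef_comp_poly.
under eq_bigr => i _ do rewrite exprZn coefZ coefXn mulrA mulr_natr mulrb eq_sym.
rewrite -big_mkcond (big_ord1_eq _ (fun i => p`_i * c ^+ i)) mulrC.
case: ltnP => // hj.
by rewrite nth_default ?mulr0.
Qed.

Lemma conv_dilate (R : fieldType) (c : R) (f w : nat -> R) m : c != 0 ->
  c ^+ m * conv (fun k => f k / c ^+ k) w m = conv f (fun l => c ^+ l * w l) m.
Proof.
move=> c0; rewrite /conv mulr_sumr; apply: eq_bigr => k _.
rewrite -{1}(subnK (leq_ord k)) exprD.
have ck : c ^+ k != 0 by rewrite expf_neq0.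
by field.
Qed.

Lemma expfz_pred_sub (R : fieldType) (c : R) n k : c != 0 -> (0 < n)%N ->
  c ^ (n%:Z - k%:Z - 1) = c ^+ n.-1 / c ^+ k.
Proof.
move=> c0 n0.
by rewrite (_ : n%:Z - k%:Z - 1 = (n.-1)%:Z + - k%:Z)%R ?expfzDr ?exprnN //; lia.
Qed.

Section QGenocchi.
Variables (R : realFieldType) (q : R) (g : nat -> R).
Hypotheses (q_gt0 : 0 < q) (q_lt1 : q < 1).

Let a k := g k / qfact q k.
Let u := eq1coef q.

Hypothesis genocchi_gf : forall n, conv a u n = (n == 1)%N%:R * 2.

Definition genocchi_riccati m : R :=
  conv (fun k => a k / q ^+ k) a m / 2 - a m.-1 / q + a m - q * (qint q m * a m / q ^+ m).

Let q_neq0 : q != 0. Proof. by rewrite gt_eqF. Qed.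
Let q_neq1 : q != 1. Proof. by rewrite lt_eqF. Qed.

Let u0 : u 0%N = 2.
Proof. by rewrite /u /eq1coef qfact0 invr1. Qed.

Lemma genocchi0 : a 0%N = 0.
Proof.
have := genocchi_gf 0; rewrite /conv big_ord1 subnn u0 mul0r => /eqP.
by rewrite mulf_eq0 pnatr_eq0 orbF => /eqP.
Qed.

Lemma genocchi1 : a 1%N = 1.
Proof.
have := genocchi_gf 1; rewrite /conv big_ord_recr big_ord1 /= subnn u0 genocchi0.
by rewrite mul0r add0r mul1r => E; lra.
Qed.

Lemma conv_qint_genocchi p :
  conv (fun k => qint q k * a k) (fun l => q ^+ l * u l) p.+1
  = (p == 0)%N%:R * 2 - (p == 1)%N%:R * 2 + a p.
Proof.
apply: (addIr (conv a (fun l => qint q l * u l) p.+1)); rewrite -qint_conv.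
have -> : conv a (fun l => qint q l * u l) p.+1 = conv a u p - a p.
  rewrite /conv big_ord_recr /= subnn qint0 mul0r mulr0 addr0.
  have := conv_delta a (fun=> 1) 0 p; rewrite subn0 mulr1 /= => <-.
  rewrite /conv -sumrB; apply: eq_bigr => k _.
  by rewrite subSn ?leq_ord // qint_eq1coefS // mulr1 mulrBr.
by rewrite !genocchi_gf; case: p => [|[|p]] /=; rewrite ?(qint1 q_neq1); ring.
Qed.

Lemma conv_genocchi_riccati m : conv genocchi_riccati u m = 0.
Proof.
case: m => [|p].
  by rewrite /conv big_ord1 /genocchi_riccati /conv big_ord1 qint0 genocchi0 /=; ring.
have -> : conv genocchi_riccati u p.+1
    = conv (conv (fun k => a k / q ^+ k) a) u p.+1 / 2 - conv (fun k => a k.-1) u p.+1 / q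
      + conv a u p.+1 - q * conv (fun k => qint q k * a k / q ^+ k) u p.+1.
  rewrite /conv !mulr_suml mulr_sumr -!sumrN -!big_split /=.
  by apply: eq_bigr => k _; rewrite /genocchi_riccati /conv; ring.
rewrite convA conv_shiftl genocchi0 mul0r add0r.
have -> : conv (fun k => a k / q ^+ k) (conv a u) p.+1
    = conv (fun k => a k / q ^+ k) (fun l => (l == 1)%N%:R * 2) p.+1.
  by apply: eq_bigr => k _; rewrite genocchi_gf.
have := conv_dilate (fun k => qint q k * a k) u p.+1 q_neq0.
rewrite conv_qint_genocchi => /(canRL (mulKf (expf_neq0 _ q_neq0))) ->.
rewrite conv_delta subSS subn0 !genocchi_gf.
case: p => [|[|p]] /=; rewrite ?expr1 ?expr0 ?exprS; field.
all: by rewrite ?q_neq0 ?andbT ?(expf_neq0 _ q_neq0).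
Qed.

Lemma genocchi_riccati_eq0 m : genocchi_riccati m = 0.
Proof. by apply: (conv_eq0_cancel _ conv_genocchi_riccati); rewrite u0 pnatr_eq0. Qed.

Lemma sum_genocchi_conv_tail n m : (0 < n)%N -> (m <= n)%N ->
  \sum_(2 <= k < n.+1) q ^ (n%:Z - k%:Z - 1) * g k / (2 * qfact q k) * a (m - k)%N
  = q ^+ n.-1 / 2 * (conv (fun k => a k / q ^+ k) a m - a m.-1 / q).
Proof.
move=> n0 mn.
have -> : \sum_(2 <= k < n.+1) q ^ (n%:Z - k%:Z - 1) * g k / (2 * qfact q k) * a (m - k)%N
    = q ^+ n.-1 / 2 * \sum_(2 <= k < n.+1) a k / q ^+ k * a (m - k)%N.
  rewrite mulr_sumr; apply: eq_bigr => k _; rewrite expfz_pred_sub // /a.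
  by field; rewrite !qfact_neq0 // expf_neq0.
rewrite (conv_widen _ genocchi0 mn) (big_ltn (ltn0Sn n)) big_ltn ?ltnS //.
rewrite genocchi0 genocchi1 expr1 subn0 subn1 !mul0r add0r mul1r.
by rewrite [q^-1 * _]mulrC addrAC subrr add0r.
Qed.

Variable G : nat -> {poly R}.
Hypothesis genocchi_poly_gf : forall n,
  (qfact q n)^-1 *: G n = \sum_(k < n.+1) (g k / qfact q k / qfact q (n - k)) *: 'X^(n - k).

Lemma coef_genocchi_poly n i : (G n)`_i = qfact q n / qfact q i * a (n - i)%N.
Proof.
rewrite -[G n](scalerKV (qfact_neq0 q_gt0 q_lt1 n)) genocchi_poly_gf coefZ coef_sum.
have -> : \sum_(k < n.+1) ((g k / qfact q k / qfact q (n - k)) *: 'X^(n - k))`_i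
    = conv a (fun l => (l == i)%:R * (qfact q l)^-1) n.
  by apply: eq_bigr => k _; rewrite coefZ coefXn eq_sym mulrAC -mulrA.
rewrite (conv_delta _ (fun l => (qfact q l)^-1)).
case: leqP => [_ | ni]; first by rewrite mulrA mulrAC.
by rewrite (_ : (n - i = 0)%N) ?genocchi0 ?mulr0 //; lia.
Qed.

Lemma coef_qderivn_genocchi_poly n k j :
  (qderivn q k (G n))`_j = qfact q n / qfact q j * a (n - j - k)%N.
Proof.
apply: (mulfI (qfact_neq0 q_gt0 q_lt1 j)).
rewrite coef_qderivn coef_genocchi_poly subnDA.
by field; rewrite !qfact_neq0.
Qed.

Definition genocchi_qdiff n (p : {poly R}) : {poly R} :=
  \sum_(2 <= k < n.+1) ((q ^ (n%:Z - k%:Z - 1) * g k) / (2 * qfact q k)) *: qderivn q k p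
  - (q ^ (n%:Z - 2) / 2) *: qderiv q p + q ^+ n.-1 *: p + q ^+ n *: ('X * qderiv q p)
  - qint q n *: (p \Po (q *: 'X)).

Lemma coef_genocchi_qdiff n j : (0 < n)%N ->
  (genocchi_qdiff n (G n))`_j = qfact q n / qfact q j * q ^+ n.-1 * genocchi_riccati (n - j).
Proof.
move=> n0; rewrite /genocchi_qdiff !(coefB, coefD, coefZ) coef_sum.
under eq_bigr do rewrite coefZ coef_qderivn_genocchi_poly mulrCA.
rewrite -mulr_sumr sum_genocchi_conv_tail ?leq_subr //.
rewrite coef_mulX_qderiv coef_comp_scaleX -[qderiv q (G n)]/(qderivn q 1 (G n)).
rewrite coef_qderivn_genocchi_poly coef_genocchi_poly subn1.
rewrite (_ : n%:Z - 2 = n%:Z - 1%:Z - 1)%R; last by lia.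
rewrite (expfz_pred_sub 1 q_neq0 n0) expr1 /genocchi_riccati.
have [jn | nj] := leqP j n; last first.
  by rewrite (_ : (n - j = 0)%N) ?genocchi0 /=; [ring | lia].
have qn : q ^+ n = q ^+ n.-1 * q by rewrite -exprSr prednK.
have qm : q ^+ (n - j) != 0 by rewrite expf_neq0.
have qj : q ^+ j = q ^+ n.-1 * q / q ^+ (n - j) by rewrite -qn -(subnKC jn) exprD addKn mulfK.
have qintn : qint q n = qint q (n - j) + q ^+ (n - j) * qint q j by rewrite -qintD subnKC.
by rewrite qn qj qintn; field; rewrite qm q_neq0 qfact_neq0.
Qed.

Lemma genocchi_qdiff_eq0 n : (0 < n)%N -> genocchi_qdiff n (G n) = 0.
Proof.
by move=> n0; apply/polyP => j; rewrite coef_genocchi_qdiff // genocchi_riccati_eq0 mulr0 coef0.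
Qed.

End QGenocchi.

Theorem theorem8 (R : realFieldType) (q : R) (g : nat -> R) (G : nat -> {poly R}) :
  0 < q -> q < 1 ->
  (forall n : nat,
      \sum_(k < n.+1) (g k / qfact q k) * eq1coef q (n - k) = (n == 1%N)%:R * 2) ->
  (forall n : nat,
      (qfact q n)^-1 *: G n
      = \sum_(k < n.+1) (g k / qfact q k / qfact q (n - k)) *: 'X^(n - k)) ->
  forall n : nat, (0 < n)%N ->
    \sum_(2 <= k < n.+1)
        ((q ^ (n%:Z - k%:Z - 1) * g k) / (2 * qfact q k)) *: qderivn q k (G n)
    - (q ^ (n%:Z - 2) / 2) *: qderiv q (G n)
    + q ^+ n.-1 *: G n
    + q ^+ n *: ('X * qderiv q (G n))
    - qint q n *: (G n \Po (q *: 'X))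
    = 0.
Proof.
move=> q_gt0 q_lt1 genocchi_gf genocchi_poly_gf n n0.
exact: (genocchi_qdiff_eq0 q_gt0 q_lt1 genocchi_gf genocchi_poly_gf n0).
Qed.
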